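(* Let $h>0$ and $J>0$ with $\lambda=J/h<8/9$ (i.e. $\lambda\lesssim 0.89$), let $\Gamma_{abs}>0$ and $\Gamma^x_{dph}>0$. Consider the two-qubit battery Hamiltonian $H_B$ and initial state $\rho_0$ described in the context, and for $\Gamma\ge 0$ let $\rho^{(\Gamma)}_t$ be the solution of the master equation $$\frac{d\rho}{dt}=-i[H_B,\rho]+\Gamma_{abs}\sum_{j=1}^{2}\Big(\sigma^+_j\rho\,\sigma^-_j-\tfrac12\{\sigma^-_j\sigma^+_j,\rho\}\Big)+\Gamma\sum_{j=1}^{2}\big(\sigma^x_j\rho\,\sigma^x_j-\rho\big),\qquad \rho(0)=\rho_0 .$$ Define the work gained $W_\Gamma(t)=\mathrm{Tr}(H_B\rho^{(\Gamma)}_t)-\mathrm{Tr}(H_B\rho_0)$. Then, in the transient regime, the work gained with local bit-flip noise exceeds the work gained without noise: there exists $t^*>0$ such that $W_{\Gamma^x_{dph}}(t)>W_0(t)$ for all $0<t<t^*$.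
   Context: Two qubits with computational basis $|00\rangle,|01\rangle,|10\rangle,|11\rangle$, where $\sigma^z|0\rangle=|0\rangle$, $\sigma^z|1\rangle=-|1\rangle$. $\sigma^x,\sigma^y,\sigma^z$ are the Pauli matrices, $\sigma^{\pm}=(\sigma^x\pm i\sigma^y)/2$, and $\sigma^a_1=\sigma^a\otimes I$, $\sigma^a_2=I\otimes\sigma^a$. The battery Hamiltonian (two-spin transverse Ising model) is, in the computational basis, $$H_B=\begin{pmatrix} h&0&0&J/4\\ 0&0&J/4&0\\ 0&J/4&0&0\\ J/4&0&0&-h\end{pmatrix}.$$ Set $e_0=-\sqrt{h^2+\tfrac{5J^2}{8}}$, $p=\frac{4(h+e_0)}{J}$, and let the initial state be $$\rho_0=\frac{1}{1+p^2}\begin{pmatrix} p^2&0&0&p\\ 0&0&0&0\\ 0&0&0&0\\ p&0&0&1\end{pmatrix}.$$ The terms with $\Gamma_{abs}$ model a local bosonic reservoir charging each spin (absorption channel); the terms with $\Gamma$ model local bit-flip (dephasing along $x$) noise on each spin; $\Gamma=0$ is the noiseless case. *)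

From Stdlib Require Import Reals Lra.
From Coquelicot Require Import Coquelicot.
Open Scope R_scope.

(* Complex 4x4 (and 2x2) matrices as entry functions; only indices 0..3
   (resp. 0..1) are meaningful.  Computational basis ordering:
   0 = |00>, 1 = |01>, 2 = |10>, 3 = |11>  (first qubit = high bit). *)
Definition Mat := nat -> nat -> C.

Definition mmul (A B : Mat) : Mat := fun i j =>
  Cplus (Cplus (Cmult (A i 0%nat) (B 0%nat j)) (Cmult (A i 1%nat) (B 1%nat j)))
        (Cplus (Cmult (A i 2%nat) (B 2%nat j)) (Cmult (A i 3%nat) (B 3%nat j))).
Definition madd (A B : Mat) : Mat := fun i j => Cplus (A i j) (B i j).
Definition msub (A B : Mat) : Mat := fun i j => Cminus (A i j) (B i j).
Definition mscale (c : C) (A : Mat) : Mat := fun i j => Cmult c (A i j).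
Definition comm (A B : Mat) : Mat := msub (mmul A B) (mmul B A).
Definition acomm (A B : Mat) : Mat := madd (mmul A B) (mmul B A).
Definition trace (A : Mat) : C :=
  Cplus (Cplus (A 0%nat 0%nat) (A 1%nat 1%nat)) (Cplus (A 2%nat 2%nat) (A 3%nat 3%nat)).

Definition I2 : Mat := fun a b =>
  match a, b with 0, 0 => RtoC 1 | 1, 1 => RtoC 1 | _, _ => RtoC 0 end%nat.
Definition sx : Mat := fun a b =>
  match a, b with 0, 1 => RtoC 1 | 1, 0 => RtoC 1 | _, _ => RtoC 0 end%nat.
Definition sy : Mat := fun a b =>
  match a, b with 0, 1 => Copp Ci | 1, 0 => Ci | _, _ => RtoC 0 end%nat.
Definition sz : Mat := fun a b =>
  match a, b with 0, 0 => RtoC 1 | 1, 1 => RtoC (-1) | _, _ => RtoC 0 end%nat.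
Definition splus : Mat := fun a b => Cmult (RtoC (1/2)) (Cplus (sx a b) (Cmult Ci (sy a b))).
Definition sminus : Mat := fun a b => Cmult (RtoC (1/2)) (Cminus (sx a b) (Cmult Ci (sy a b))).

Definition kron (A B : Mat) : Mat := fun i j =>
  Cmult (A (i / 2)%nat (j / 2)%nat) (B (i mod 2)%nat (j mod 2)%nat).
Definition on1 (A : Mat) : Mat := kron A I2.
Definition on2 (A : Mat) : Mat := kron I2 A.

Definition HB (h J : R) : Mat := fun i j =>
  match i, j with
  | 0, 0 => RtoC h
  | 0, 3 => RtoC (J / 4) | 1, 2 => RtoC (J / 4)
  | 2, 1 => RtoC (J / 4) | 3, 0 => RtoC (J / 4)
  | 3, 3 => RtoC (- h)
  | _, _ => RtoC 0 end%nat.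

Definition e0 (h J : R) : R := - sqrt (h ^ 2 + 5 * J ^ 2 / 8).
Definition pp (h J : R) : R := 4 * (h + e0 h J) / J.

Definition rho0 (h J : R) : Mat := fun i j =>
  let p := pp h J in
  match i, j with
  | 0, 0 => RtoC (p ^ 2 / (1 + p ^ 2))
  | 0, 3 => RtoC (p / (1 + p ^ 2)) | 3, 0 => RtoC (p / (1 + p ^ 2))
  | 3, 3 => RtoC (1 / (1 + p ^ 2))
  | _, _ => RtoC 0 end%nat.

Definition dissip_abs (s : Mat -> Mat) (rho : Mat) : Mat :=
  msub (mmul (mmul (s splus) rho) (s sminus))
       (mscale (RtoC (1/2)) (acomm (mmul (s sminus) (s splus)) rho)).
Definition dissip_bf (s : Mat -> Mat) (rho : Mat) : Mat :=
  msub (mmul (mmul (s sx) rho) (s sx)) rho.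

Definition lindblad (h J Gabs G : R) (rho : Mat) : Mat :=
  madd (mscale (Copp Ci) (comm (HB h J) rho))
  (madd (mscale (RtoC Gabs) (madd (dissip_abs on1 rho) (dissip_abs on2 rho)))
        (mscale (RtoC G) (madd (dissip_bf on1 rho) (dissip_bf on2 rho)))).

Definition is_solution (h J Gabs G : R) (rho : R -> Mat) : Prop :=
  (forall i j, (i < 4)%nat -> (j < 4)%nat -> rho 0 i j = rho0 h J i j) /\
  (forall i j, (i < 4)%nat -> (j < 4)%nat ->
     filterlim (fun t => rho t i j) (at_right 0) (locally (rho0 h J i j))) /\
  (forall t i j, 0 < t -> (i < 4)%nat -> (j < 4)%nat ->
     is_derive (fun s => rho s i j) t (lindblad h J Gabs G (rho t) i j)).

(* Work gained: Tr(H_B rho_t) - Tr(H_B rho_0) (real part; it is real). *)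
Definition work (h J : R) (rho : R -> Mat) (t : R) : R :=
  Re (trace (mmul (HB h J) (rho t))) - Re (trace (mmul (HB h J) (rho0 h J))).

(** The work gain [W_Γ(t) - W_0(t)] is [E(ρ^Γ_t) - E(ρ^0_t)] with
    [E(ρ) = Re Tr(H_B ρ)]; it vanishes at [t = 0], and by the master equation its
    derivative tends, as [t -> 0+], to the energy change that the bit-flip terms
    produce on [ρ_0]: the coherent and absorption parts are the same for both
    evolutions and cancel in the limit.  The bit-flip dissipator leaves the
    [σ^x σ^x] coupling of [H_B] invariant and reverses each [σ^z_j], so this
    limit is [-2hΓ (ρ_0[00,00] - ρ_0[11,11]) = 2hΓ (1 - p^2)/(1 + p^2)], which is
    positive because [p^2 < 1] is equivalent to [9J < 8h].  A function vanishing
    at [0+] whose derivative has a positive limit there is positive on some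
    interval to the right of [0]. *)
From Stdlib Require Import Reals Lra Lia.
From Coquelicot Require Import Coquelicot.
Open Scope R_scope.

Section FilterLimits.

Context {T : Type} {F : (T -> Prop) -> Prop} {FF : Filter F}.

Lemma filterlim_Rplus (f g : T -> R) (a b : R) :
  filterlim f F (locally a) -> filterlim g F (locally b) ->
  filterlim (fun t => f t + g t) F (locally (a + b)).
Proof.
  intros Hf Hg.
  exact (filterlim_comp_2 _ _ _ Hf Hg (@filterlim_plus R_AbsRing _ a b)).
Qed.

Lemma filterlim_Rmult (f g : T -> R) (a b : R) :
  filterlim f F (locally a) -> filterlim g F (locally b) ->
  filterlim (fun t => f t * g t) F (locally (a * b)).
Proof.
  intros Hf Hg.
  exact (filterlim_comp_2 _ _ _ Hf Hg (@filterlim_mult R_AbsRing a b)).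
Qed.

Lemma filterlim_Ropp (f : T -> R) (a : R) :
  filterlim f F (locally a) -> filterlim (fun t => - f t) F (locally (- a)).
Proof. intros Hf. eapply filterlim_comp; [exact Hf | exact (@filterlim_opp R_AbsRing _ a)]. Qed.

Lemma filterlim_Rminus (f g : T -> R) (a b : R) :
  filterlim f F (locally a) -> filterlim g F (locally b) ->
  filterlim (fun t => f t - g t) F (locally (a - b)).
Proof. intros Hf Hg. apply filterlim_Rplus; [exact Hf | exact (filterlim_Ropp _ _ Hg)]. Qed.

Lemma filterlim_C_Re_Im (f : T -> C) (z : C) :
  filterlim f F (locally z) <->
  filterlim (fun t => Re (f t)) F (locally (Re z)) /\
  filterlim (fun t => Im (f t)) F (locally (Im z)).
Proof.
  rewrite !filterlim_locally. split.
  - intros Hf. split; intros eps; generalize (Hf eps); apply filter_imp;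
      intros t [HRe HIm]; assumption.
  - intros [HRe HIm] eps. exact (filter_and _ _ (HRe eps) (HIm eps)).
Qed.

Lemma filterlim_Cplus (f g : T -> C) (a b : C) :
  filterlim f F (locally a) -> filterlim g F (locally b) ->
  filterlim (fun t => Cplus (f t) (g t)) F (locally (Cplus a b)).
Proof.
  rewrite !filterlim_C_Re_Im. intros [Hfr Hfi] [Hgr Hgi].
  split; apply filterlim_Rplus; assumption.
Qed.

Lemma filterlim_Cmult (f g : T -> C) (a b : C) :
  filterlim f F (locally a) -> filterlim g F (locally b) ->
  filterlim (fun t => Cmult (f t) (g t)) F (locally (Cmult a b)).
Proof.
  rewrite !filterlim_C_Re_Im. intros [Hfr Hfi] [Hgr Hgi].
  split; [apply filterlim_Rminus | apply filterlim_Rplus];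
    apply filterlim_Rmult; assumption.
Qed.

Lemma filterlim_Copp (f : T -> C) (a : C) :
  filterlim f F (locally a) -> filterlim (fun t => Copp (f t)) F (locally (Copp a)).
Proof.
  rewrite !filterlim_C_Re_Im. intros [Hfr Hfi].
  split; apply filterlim_Ropp; assumption.
Qed.

Definition mat_filterlim (M : T -> Mat) (M0 : Mat) : Prop :=
  forall i j, (i < 4)%nat -> (j < 4)%nat ->
    filterlim (fun t => M t i j) F (locally (M0 i j)).

Lemma mat_filterlim_const (K : Mat) : mat_filterlim (fun _ => K) K.
Proof. intros i j _ _. apply filterlim_const. Qed.

Lemma mat_filterlim_madd (A B : T -> Mat) (A0 B0 : Mat) :
  mat_filterlim A A0 -> mat_filterlim B B0 ->
  mat_filterlim (fun t => madd (A t) (B t)) (madd A0 B0).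
Proof. intros HA HB i j Hi Hj. apply filterlim_Cplus; auto. Qed.

Lemma mat_filterlim_msub (A B : T -> Mat) (A0 B0 : Mat) :
  mat_filterlim A A0 -> mat_filterlim B B0 ->
  mat_filterlim (fun t => msub (A t) (B t)) (msub A0 B0).
Proof. intros HA HB i j Hi Hj. apply filterlim_Cplus, filterlim_Copp; auto. Qed.

Lemma mat_filterlim_mscale (c : C) (A : T -> Mat) (A0 : Mat) :
  mat_filterlim A A0 -> mat_filterlim (fun t => mscale c (A t)) (mscale c A0).
Proof. intros HA i j Hi Hj. apply filterlim_Cmult; [apply filterlim_const | auto]. Qed.

Lemma mat_filterlim_mmul (A B : T -> Mat) (A0 B0 : Mat) :
  mat_filterlim A A0 -> mat_filterlim B B0 ->
  mat_filterlim (fun t => mmul (A t) (B t)) (mmul A0 B0).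
Proof.
  intros HA HB i j Hi Hj.
  assert (Hk : forall k, (k < 4)%nat ->
    filterlim (fun t => Cmult (A t i k) (B t k j)) F (locally (Cmult (A0 i k) (B0 k j)))).
  { intros k Hk. apply filterlim_Cmult; auto. }
  apply filterlim_Cplus; apply filterlim_Cplus; apply Hk; lia.
Qed.

Lemma mat_filterlim_lindblad (h J Gabs G : R) (A : T -> Mat) (A0 : Mat) :
  mat_filterlim A A0 ->
  mat_filterlim (fun t => lindblad h J Gabs G (A t)) (lindblad h J Gabs G A0).
Proof.
  intros HA. unfold lindblad, dissip_abs, dissip_bf, comm, acomm.
  repeat lazymatch goal with
  | |- mat_filterlim (fun _ => ?K) _ => apply mat_filterlim_const
  | |- mat_filterlim (fun t => madd _ _) _ => apply mat_filterlim_madd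
  | |- mat_filterlim (fun t => msub _ _) _ => apply mat_filterlim_msub
  | |- mat_filterlim (fun t => mscale _ _) _ => apply mat_filterlim_mscale
  | |- mat_filterlim (fun t => mmul _ _) _ => apply mat_filterlim_mmul
  | |- mat_filterlim A _ => exact HA
  end.
Qed.

End FilterLimits.

Lemma at_right_0_interval (P : R -> Prop) :
  at_right 0 P -> exists d, 0 < d /\ forall t, 0 < t < d -> P t.
Proof.
  intros [d Hd]. exists d. split; [apply cond_pos |].
  intros t [Ht Htd]. apply Hd; [| exact Ht].
  change (Rabs (t - 0) < d). rewrite Rminus_0_r, Rabs_pos_eq; lra.
Qed.

Lemma filterlim_at_right_0_near (f : R -> R) (l eps : R) :
  filterlim f (at_right 0) (locally l) -> 0 < eps ->
  exists d, 0 < d /\ forall t, 0 < t < d -> l - eps < f t < l + eps.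
Proof.
  intros Hf Heps. rewrite filterlim_locally in Hf.
  destruct (at_right_0_interval _ (Hf (mkposreal eps Heps))) as [d [Hd Hnear]].
  exists d. split; [exact Hd |]. intros t Ht.
  assert (Hball : Rabs (f t - l) < eps) by exact (Hnear t Ht).
  apply Rabs_def2 in Hball. lra.
Qed.

(* Mean value theorem on [[s, t]] with [s] chosen so close to [0] that
   [|f s| < l t / 4], while the slope there exceeds [l / 2]. *)
Lemma pos_near_0_of_derive_lim (f f' : R -> R) (l : R) :
  0 < l ->
  filterlim f (at_right 0) (locally 0) ->
  filterlim f' (at_right 0) (locally l) ->
  (forall t, 0 < t -> is_derive f t (f' t)) ->
  exists tstar, 0 < tstar /\ forall t, 0 < t < tstar -> 0 < f t.
Proof.
  intros Hl Hf Hf' Hder.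
  destruct (filterlim_at_right_0_near f' l (l / 2) Hf') as [d [Hd Hslope]]; [lra |].
  exists d. split; [exact Hd |]. intros t [Ht Htd].
  destruct (filterlim_at_right_0_near f 0 (l * t / 4) Hf) as [d' [Hd' Hsmall]]; [nra |].
  set (s := Rmin (t / 2) (d' / 2)).
  assert (Hs : 0 < s <= t / 2 /\ s <= d' / 2).
  { unfold s. split; [split |]; [apply Rmin_glb_lt | apply Rmin_l | apply Rmin_r]; lra. }
  destruct (MVT_gen f s t f') as [c [Hc Hmvt]].
  - intros x Hx. rewrite Rmin_left, Rmax_right in Hx by lra. apply Hder. lra.
  - intros x Hx. rewrite Rmin_left, Rmax_right in Hx by lra.
    apply continuity_pt_filterlim, (ex_derive_continuous (V := R_NormedModule)).
    exists (f' x). apply Hder. lra.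
  - rewrite Rmin_left, Rmax_right in Hc by lra.
    assert (Hfc : l - l / 2 < f' c) by (apply Hslope; lra).
    assert (Hfs : 0 - l * t / 4 < f s) by (apply Hsmall; lra).
    nra.
Qed.

Lemma is_derive_Re (f : R -> C) (t : R) (l : C) :
  is_derive f t l -> is_derive (fun s => Re (f s)) t (Re l).
Proof.
  intros Hf.
  apply (filterdiff_comp f (fun z : R * R => fst z) _ (fun z : R * R => fst z) Hf).
  apply filterdiff_linear, is_linear_fst.
Qed.

Definition energy (h J : R) (M : Mat) : R := Re (trace (mmul (HB h J) M)).

Lemma energy_entries (h J : R) (M : Mat) :
  energy h J M =
  h * Re (M 0 0)%nat
  + J / 4 * (Re (M 0 3)%nat + Re (M 1 2)%nat + Re (M 2 1)%nat + Re (M 3 0)%nat)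
  - h * Re (M 3 3)%nat.
Proof. unfold energy, trace, mmul, HB, Re; simpl. ring. Qed.

Lemma energy_madd (h J : R) (A B : Mat) :
  energy h J (madd A B) = energy h J A + energy h J B.
Proof. rewrite !energy_entries. unfold madd, Re; simpl. ring. Qed.

Lemma energy_mscale_real (h J g : R) (A : Mat) :
  energy h J (mscale (RtoC g) A) = g * energy h J A.
Proof. rewrite !energy_entries. unfold mscale, Re; simpl. ring. Qed.

Lemma filterlim_energy {T : Type} {F : (T -> Prop) -> Prop} {FF : Filter F}
    (h J : R) (A : T -> Mat) (A0 : Mat) :
  mat_filterlim (F := F) A A0 ->
  filterlim (fun t => energy h J (A t)) F (locally (energy h J A0)).
Proof.
  intros HA.
  assert (HRe : forall i j, (i < 4)%nat -> (j < 4)%nat ->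
    filterlim (fun t => Re (A t i j)) F (locally (Re (A0 i j)))).
  { intros i j Hi Hj. apply filterlim_C_Re_Im, HA; assumption. }
  apply (filterlim_ext (fun t => h * Re (A t 0 0)%nat
    + J / 4 * (Re (A t 0 3)%nat + Re (A t 1 2)%nat + Re (A t 2 1)%nat + Re (A t 3 0)%nat)
    - h * Re (A t 3 3)%nat)).
  { intros t. symmetry. apply energy_entries. }
  rewrite energy_entries.
  repeat first
    [ apply filterlim_Rminus | apply filterlim_Rplus | apply filterlim_Rmult
    | apply filterlim_const | apply HRe; lia ].
Qed.

Lemma is_derive_energy (h J : R) (A : R -> Mat) (L : Mat) (t : R) :
  (forall i j, (i < 4)%nat -> (j < 4)%nat -> is_derive (fun s => A s i j) t (L i j)) ->
  is_derive (fun s => energy h J (A s)) t (energy h J L).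
Proof.
  intros HA.
  assert (HRe : forall i j, (i < 4)%nat -> (j < 4)%nat ->
    is_derive (fun s => Re (A s i j)) t (Re (L i j))).
  { intros i j Hi Hj. apply is_derive_Re, HA; assumption. }
  apply (is_derive_ext (fun s => h * Re (A s 0 0)%nat
    + J / 4 * (Re (A s 0 3)%nat + Re (A s 1 2)%nat + Re (A s 2 1)%nat + Re (A s 3 0)%nat)
    - h * Re (A s 3 3)%nat)).
  { intros s. symmetry. apply energy_entries. }
  rewrite energy_entries.
  repeat first
    [ apply (is_derive_minus (V := R_NormedModule))
    | apply (is_derive_plus (V := R_NormedModule))
    | apply is_derive_scal
    | apply HRe; lia ].
Qed.

(* [σ^x_1 σ^x_2] commutes with each [σ^x_j], while [σ^x_j σ^z_j σ^x_j = - σ^z_j]. *)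
Lemma energy_dissip_bf (h J : R) (M : Mat) :
  energy h J (madd (dissip_bf on1 M) (dissip_bf on2 M)) =
  - 2 * h * (Re (M 0 0)%nat - Re (M 3 3)%nat).
Proof.
  unfold energy, trace, HB, madd, dissip_bf, msub, mmul, on1, on2, kron, sx, I2, Re.
  simpl. ring.
Qed.

Lemma energy_lindblad_bitflip_gain (h J Gabs G : R) (M : Mat) :
  energy h J (lindblad h J Gabs G M) - energy h J (lindblad h J Gabs 0 M) =
  - 2 * h * G * (Re (M 0 0)%nat - Re (M 3 3)%nat).
Proof.
  unfold lindblad. rewrite !energy_madd, !energy_mscale_real, energy_dissip_bf.
  ring.
Qed.

Lemma pp_sq_lt_1 (h J : R) : 0 < h -> 0 < J -> J / h < 8 / 9 -> pp h J ^ 2 < 1.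
Proof.
  intros Hh HJ Hratio.
  assert (HJh : 9 * J < 8 * h).
  { apply (Rmult_lt_compat_r h) in Hratio; [| exact Hh].
    unfold Rdiv in Hratio. rewrite Rmult_assoc, Rinv_l in Hratio by lra. lra. }
  unfold pp, e0.
  set (s := sqrt (h ^ 2 + 5 * J ^ 2 / 8)).
  assert (Hs2 : s * s = h ^ 2 + 5 * J ^ 2 / 8) by (apply sqrt_sqrt; nra).
  assert (Hs0 : 0 <= s) by apply sqrt_pos.
  assert (Hsh : h < s) by nra.
  assert (Hs : s < h + J / 4) by nra.
  replace ((4 * (h + - s) / J) ^ 2) with ((4 * (s - h) / J) ^ 2)
    by (unfold Rdiv; ring).
  assert (Hq : 0 < 4 * (s - h) / J < 1).
  { split; [apply Rdiv_lt_0_compat; lra |].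
    apply (Rmult_lt_reg_r J); [exact HJ |].
    unfold Rdiv. rewrite Rmult_assoc, Rinv_l by lra. lra. }
  nra.
Qed.

Lemma rho0_pop00_lt_pop11 (h J : R) :
  pp h J ^ 2 < 1 -> Re (rho0 h J 0 0)%nat < Re (rho0 h J 3 3)%nat.
Proof.
  intros Hp. simpl. unfold Rdiv.
  apply Rmult_lt_compat_r; [apply Rinv_0_lt_compat; nra | exact Hp].
Qed.

Lemma is_solution_mat_filterlim (h J Gabs G : R) (rho : R -> Mat) :
  is_solution h J Gabs G rho -> mat_filterlim (F := at_right 0) rho (rho0 h J).
Proof. intros [_ [Hlim _]]. exact Hlim. Qed.

Theorem theorem2 (h J Gabs Gdph : R) (rhoN rhoG : R -> Mat) :
  0 < h -> 0 < J -> J / h < 8 / 9 -> 0 < Gabs -> 0 < Gdph ->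
  is_solution h J Gabs 0 rhoN ->
  is_solution h J Gabs Gdph rhoG ->
  exists tstar, 0 < tstar /\
    forall t, 0 < t < tstar -> work h J rhoG t > work h J rhoN t.
Proof.
  intros Hh HJ Hratio _ HG HsolN HsolG.
  pose proof (pp_sq_lt_1 h J Hh HJ Hratio) as Hp.
  pose proof (is_solution_mat_filterlim _ _ _ _ _ HsolN) as HlimN.
  pose proof (is_solution_mat_filterlim _ _ _ _ _ HsolG) as HlimG.
  destruct (pos_near_0_of_derive_lim
    (fun t => energy h J (rhoG t) - energy h J (rhoN t))
    (fun t => energy h J (lindblad h J Gabs Gdph (rhoG t))
              - energy h J (lindblad h J Gabs 0 (rhoN t)))
    (- 2 * h * Gdph * (Re (rho0 h J 0 0)%nat - Re (rho0 h J 3 3)%nat)))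
    as [tstar [Htstar Hpos]].
  - pose proof (rho0_pop00_lt_pop11 h J Hp).
    assert (0 < h * Gdph) by (apply Rmult_lt_0_compat; assumption).
    nra.
  - rewrite <- (Rminus_diag (energy h J (rho0 h J))) at 2.
    apply filterlim_Rminus; apply filterlim_energy; assumption.
  - rewrite <- (energy_lindblad_bitflip_gain h J Gabs Gdph (rho0 h J)).
    apply filterlim_Rminus; apply filterlim_energy, mat_filterlim_lindblad; assumption.
  - destruct HsolN as [_ [_ HderN]]. destruct HsolG as [_ [_ HderG]].
    intros t Ht. apply (is_derive_minus (V := R_NormedModule));
      apply is_derive_energy; intros i j Hi Hj; auto.
  - exists tstar. split; [exact Htstar |]. intros t Ht.
    specialize (Hpos t Ht). unfold work. fold (energy h J (rhoG t)) (energy h J (rhoN t)).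
    lra.
Qed.
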